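(* Let $T_i$, $T_j$ be complete countable first-order theories and $\lambda$ an infinite cardinal. If $\neg(T_j \trianglelefteq_\lambda T_i)$ in Keisler's order, then $\neg(T_j \trianglelefteq^*_{\lambda^+,\aleph_1} T_i)$, and consequently $\neg(T_j \trianglelefteq^*_{\lambda^+,1} T_i)$.
   Context: An interpretation of a complete theory $T_0$ in a complete theory $T_*$ is a family $\bar\varphi=\langle \varphi_R : R$ a relation or function symbol of $\tau(T_0)$, or $=\rangle$ of $\tau(T_* )$-formulas such that for every $M_*\models T_*$ the $\tau(T_0)$-structure $M_*^{[\bar\varphi]}$ with domain $\{a : M_*\models\varphi_=(a,a)\}$, relations $R^{N}=\{\bar a : M_*\models \varphi_R[\bar a]\}$ and functions whose graphs are defined by the $\varphi_f$ (which are required to define functions), is a model of $T_0$. For $\kappa$ equal to $1$ or an infinite cardinal (''$1$-saturated'' means: an arbitrary model) and a cardinal $\lambda$, $T_0 \trianglelefteq^*_{\lambda,\kappa} T_1$ means: there is a complete theory $T_*$ with $|T_*|\le |T_0|+|T_1|$ interpreting $T_0$ via some $\bar\varphi_0$ and $T_1$ via some $\bar\varphi_1$ (in disjoint signatures) such that for every $\kappa$-saturated $M_*\models T_*$, if $M_*^{[\bar\varphi_1]}$ is $\lambda$-saturated then $M_*^{[\bar\varphi_0]}$ is $\lambda$-saturated. Keisler's order: $T_0\trianglelefteq_\lambda T_1$ means that for every regular ultrafilter $\mathcal D$ on $\lambda$, every $M_0\models T_0$ and every $M_1\models T_1$, if $M_1^\lambda/\mathcal D$ is $\lambda^+$-saturated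 then $M_0^\lambda/\mathcal D$ is $\lambda^+$-saturated. *)

From mathcomp Require Import all_boot.
Set Implicit Arguments.
Unset Strict Implicit.
Unset Printing Implicit Defensive.

Fixpoint lIn (T : Type) (x : T) (s : seq T) : Prop :=
  match s with [::] => False | y :: s' => y = x \/ lIn x s' end.

Record sig := Sig {
  fsym : Type; rsym : Type;
  farity : fsym -> nat; rarity : rsym -> nat }.

(* A signature is countable (so |T| = |tau(T)| + aleph_0 = aleph_0). *)
Definition countable_sig (S : sig) : Prop :=
  (exists e : fsym S -> nat, injective e) /\ (exists e : rsym S -> nat, injective e).

(* ---------- syntax (de Bruijn variables, Ex binds variable 0) ---------- *)
Inductive term (S : sig) : Type :=
| Var : nat -> term S
| App : forall f : fsym S, ('I_(farity f) -> term S) -> term S.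

Inductive formula (S : sig) : Type :=
| Eq  : term S -> term S -> formula S
| Rel : forall r : rsym S, ('I_(rarity r) -> term S) -> formula S
| Neg : formula S -> formula S
| And : formula S -> formula S -> formula S
| Ex  : formula S -> formula S.

Arguments Var {S}.

Fixpoint tbounded (S : sig) (k : nat) (t : term S) : Prop :=
  match t with
  | Var n => n < k
  | App f args => forall i, tbounded k (args i)
  end.

Fixpoint bounded (S : sig) (k : nat) (phi : formula S) : Prop :=
  match phi with
  | Eq t u => tbounded k t /\ tbounded k u
  | Rel r args => forall i, tbounded k (args i)
  | Neg p => bounded k p
  | And p q => bounded k p /\ bounded k q
  | Ex p => bounded k.+1 p
  end.

Definition sentence (S : sig) (phi : formula S) : Prop := bounded 0 phi.

(* ---------- structures (nonempty, equality is genuine equality) ---------- *)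
Record structure (S : sig) := Structure {
  carrier :> Type;
  carrier_inh : inhabited carrier;
  funs : forall f : fsym S, ('I_(farity f) -> carrier) -> carrier;
  rels : forall r : rsym S, ('I_(rarity r) -> carrier) -> Prop }.
Arguments funs {S} s f _.
Arguments rels {S} s r _.
Arguments carrier {S} s.

Definition scons (T : Type) (b : T) (e : nat -> T) : nat -> T :=
  fun n => match n with 0 => b | m.+1 => e m end.

Fixpoint eval (S : sig) (M : structure S) (e : nat -> M) (t : term S) : M :=
  match t with
  | Var n => e n
  | App f args => funs M f (fun i => eval e (args i))
  end.

Arguments eval {S} M e t.

Fixpoint holds (S : sig) (M : structure S) (e : nat -> M) (phi : formula S) : Prop :=
  match phi with
  | Eq t u => @eval _ M e t = @eval _ M e u
  | Rel r args => rels M r (fun i => @eval _ M e (args i))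
  | Neg p => ~ holds e p
  | And p q => holds e p /\ holds e q
  | Ex p => exists b : M, holds (scons b e) p
  end.
Arguments holds {S} M e phi.


Record theory := Theory { tsig : sig; tax : formula tsig -> Prop }.
Arguments tax t _ : clear implicits.

Definition models (S : sig) (M : structure S) (T : formula S -> Prop) : Prop :=
  forall phi, T phi -> forall e : nat -> M, holds M e phi.

Definition entails (S : sig) (T : formula S -> Prop) (phi : formula S) : Prop :=
  forall M : structure S, models M T -> forall e : nat -> M, holds M e phi.

Definition complete_theory (S : sig) (T : formula S -> Prop) : Prop :=
  (forall phi, T phi -> sentence phi) /\
  (exists M : structure S, models M T) /\
  (forall phi, sentence phi -> entails T phi \/ entails T (Neg phi)).

(* A formula phi(x0; x1..xk) together with parameters a : 'I_k -> M. *)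
Definition entry (S : sig) (M : structure S) :=
  { k : nat & (formula S * ('I_k -> M))%type }.

Definition penv (S : sig) (M : structure S) (k : nat) (b : M) (a : 'I_k -> M)
  : nat -> M :=
  fun n => match n with
           | 0 => b
           | m.+1 => match (insub m : option 'I_k) with Some i => a i | None => b end
           end.

Definition holds_entry (S : sig) (M : structure S) (b : M) (x : entry M) : Prop :=
  holds M (penv b (projT2 x).2) (projT2 x).1.

Definition type_over (S : sig) (M : structure S) (A : M -> Prop) (p : entry M -> Prop) :=
  forall x, p x -> bounded (projT1 x).+1 (projT2 x).1 /\ forall i, A ((projT2 x).2 i).

Definition fin_sat (S : sig) (M : structure S) (p : entry M -> Prop) : Prop :=
  forall s : seq (entry M), (forall x, lIn x s -> p x) ->
    exists b : M, forall x, lIn x s -> holds_entry b x.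

Definition realized (S : sig) (M : structure S) (p : entry M -> Prop) : Prop :=
  exists b : M, forall x, p x -> holds_entry b x.

Definition saturated (small : Type -> Prop) (S : sig) (M : structure S) : Prop :=
  forall (A : M -> Prop), small {x : M | A x} ->
  forall p : entry M -> Prop, type_over A p -> fin_sat p -> realized p.

(* |X| <= |L| : saturated (card_le L) M  means  M is |L|^+-saturated *)
Definition card_le (L : Type) (X : Type) : Prop := exists f : X -> L, injective f.
(* aleph_1-saturated = aleph_0^+-saturated *)
Definition aleph1_small (X : Type) : Prop := card_le nat X.
(* "1-saturated" = arbitrary model: no type is required to be realized *)
Definition one_small (X : Type) : Prop := False.

Definition infinite_type (L : Type) : Prop :=
  ~ exists s : seq L, forall x : L, lIn x s.

Definition ultrafilter (L : Type) (D : (L -> Prop) -> Prop) : Prop :=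
  D (fun _ => True) /\ ~ D (fun _ => False) /\
  (forall X Y, D X -> (forall t, X t -> Y t) -> D Y) /\
  (forall X Y, D X -> D Y -> D (fun t => X t /\ Y t)) /\
  (forall X, D X \/ D (fun t => ~ X t)).

Definition regular_ultrafilter (L : Type) (D : (L -> Prop) -> Prop) : Prop :=
  ultrafilter D /\
  exists X : L -> (L -> Prop), (forall i, D (X i)) /\
    forall t, exists s : seq L, forall i, X i t -> lIn i s.

Definition is_ultrapower (L : Type) (D : (L -> Prop) -> Prop) (S : sig)
  (M : structure S) (U : structure S) : Prop :=
  exists pi : (L -> M) -> U,
    (forall u : U, exists f, pi f = u) /\
    (forall f g, pi f = pi g <-> D (fun t => f t = g t)) /\
    (forall r (a : 'I_(rarity r) -> L -> M),
        rels U r (fun i => pi (a i)) <-> D (fun t => rels M r (fun i => a i t))) /\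
    (forall f (a : 'I_(farity f) -> L -> M),
        funs U f (fun i => pi (a i)) = pi (fun t => funs M f (fun i => a i t))).

(* Keisler's order  T0 <|_lambda T1,  lambda = |L| *)
Definition keisler_le (L : Type) (T0 T1 : theory) : Prop :=
  forall D : (L -> Prop) -> Prop, regular_ultrafilter D ->
  forall (M0 : structure (tsig T0)) (M1 : structure (tsig T1)),
    models M0 (tax T0) -> models M1 (tax T1) ->
  forall (U0 : structure (tsig T0)) (U1 : structure (tsig T1)),
    is_ultrapower D M0 U0 -> is_ultrapower D M1 U1 ->
    saturated (card_le L) U1 -> saturated (card_le L) U0.

Record interpretation (S0 S : sig) := Interp {
  i_eq  : formula S;
  i_rel : forall r : rsym S0, formula S;
  i_fun : forall f : fsym S0, formula S }.  (* graph phi_f(x0..x_{n-1}, x_n) *)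
Arguments i_eq {S0 S} i.
Arguments i_rel {S0 S} i r.
Arguments i_fun {S0 S} i f.

Definition holdsT (S : sig) (M : structure S) (phi : formula S) (n : nat)
  (a : 'I_n -> M) : Prop :=
  forall e : nat -> M, (forall i : 'I_n, e i = a i) -> holds M e phi.
Arguments holdsT {S} M phi {n} a.

Definition holds2 (S : sig) (M : structure S) (phi : formula S) (x y : M) : Prop :=
  forall e : nat -> M, e 0 = x -> e 1 = y -> holds M e phi.
Arguments holds2 {S} M phi x y.

Definition holdsG (S : sig) (M : structure S) (phi : formula S) (n : nat)
  (a : 'I_n -> M) (b : M) : Prop :=
  forall e : nat -> M, (forall i : 'I_n, e i = a i) -> e n = b -> holds M e phi.
Arguments holdsG {S} M phi {n} a b.

(* N is (isomorphic to) M^[I]: the quotient of {a | phi_=(a,a)} by phi_=,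
   with relations and function graphs given by the phi_R, phi_f;
   h picks representatives. *)
Definition is_interp (S0 S : sig) (I : interpretation S0 S)
  (M : structure S) (N : structure S0) : Prop :=
  exists h : N -> M,
    (forall a b : N, a = b <-> holds2 M (i_eq I) (h a) (h b)) /\
    (forall m : M, holds2 M (i_eq I) m m -> exists a : N, holds2 M (i_eq I) (h a) m) /\
    (forall r (a : 'I_(rarity r) -> N), rels N r a <-> holdsT M (i_rel I r) (fun i => h (a i))) /\
    (forall f (a : 'I_(farity f) -> N) (b : N),
        funs N f a = b <-> holdsG M (i_fun I f) (fun i => h (a i)) (h b)).

Definition interprets (T0 : theory) (S : sig) (T : formula S -> Prop)
  (I : interpretation (tsig T0) S) : Prop :=
  bounded 2 (i_eq I) /\
  (forall r, bounded (rarity r) (i_rel I r)) /\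
  (forall f, bounded (farity f).+1 (i_fun I f)) /\
  forall M : structure S, models M T ->
    exists N : structure (tsig T0), is_interp I M N /\ models N (tax T0).

Arguments interprets T0 {S} T I.

(* |T*| <= |T0| + |T1|, where |T| = |tau(T)| + aleph_0 *)
Definition sig_size_le (S S0 S1 : sig) : Prop :=
  exists f : (fsym S + rsym S) ->
             (fsym S0 + rsym S0 + (fsym S1 + rsym S1) + nat)%type, injective f.

(* T0 <|*_{lambda,kappa} T1, where lambda-saturation and kappa-saturation are
   given by the smallness predicates lam_small, kap_small *)
Definition kstar_le (lam_small kap_small : Type -> Prop) (T0 T1 : theory) : Prop :=
  exists (S : sig) (T : formula S -> Prop)
         (I0 : interpretation (tsig T0) S) (I1 : interpretation (tsig T1) S),
    complete_theory T /\ sig_size_le S (tsig T0) (tsig T1) /\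
    interprets T0 T I0 /\ interprets T1 T I1 /\
    forall M : structure S, models M T -> saturated kap_small M ->
    forall (N0 : structure (tsig T0)) (N1 : structure (tsig T1)),
      is_interp I0 M N0 -> is_interp I1 M N1 ->
      saturated lam_small N1 -> saturated lam_small N0.

(* Suppose T* witnesses T_j <|*_{lambda^+, aleph_1} T_i; let D be a regular ultrafilter on L,
   |L| = lambda, and M_0 |= T_j, M_1 |= T_i with M_1^L/D lambda^+-saturated.  Take M* |= T*
   with interpreted models K_0 |= T_j and K_1 |= T_i.  As D is countably incomplete, M*^L/D is
   aleph_1-saturated, and interpretations commute with ultrapowers, so M*^L/D interprets
   K_0^L/D and K_1^L/D.  By Keisler's theorem (D regular, countable language) the
   lambda^+-saturation of M^L/D depends only on the theory of M: it passes from M_1^L/D to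
   K_1^L/D, the choice of T* gives it for K_0^L/D, and it passes on to M_0^L/D.  Hence
   T_j <|_lambda T_i.
   Keisler's theorem: a regularizing family splits a type over lambda parameters into finite
   fragments, one per coordinate t.  At each t, which subfragments are realizable is expressed
   by a single sentence, so the parameters can be copied coordinatewise into the other model
   preserving it; this gives a finitely satisfiable type there, and a realization of it is
   copied back the same way.
   Every structure is 1-saturated, so <|*_{lambda^+,1} implies <|*_{lambda^+,aleph_1}. *)

From Pilot Require Import Defs.
From mathcomp Require Import all_boot.
From Stdlib Require Import Classical ClassicalEpsilon FunctionalExtensionality.
From Stdlib Require Import PropExtensionality ProofIrrelevance.
Set Implicit Arguments.
Unset Strict Implicit.
Unset Printing Implicit Defensive.

Definition propb (P : Prop) : bool := if excluded_middle_informative P then true else false.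

Lemma propbP (P : Prop) : reflect P (propb P).
Proof. by rewrite /propb; case: excluded_middle_informative => h; constructor. Qed.

Definition point (S : sig) (M : structure S) : M :=
  epsilon (carrier_inh M) (fun _ => True).

Section ListMembership.
Variables A B : Type.

Lemma lIn_mem (T : eqType) (x : T) s : lIn x s <-> x \in s.
Proof.
elim: s => [|y s IH] //=; rewrite in_cons; split.
- by case=> [->|/IH ->]; rewrite ?eqxx ?orbT.
- by case/orP=> [/eqP->|/IH]; [left|right].
Qed.

Lemma lIn_map (f : A -> B) y s : lIn y (map f s) <-> exists x, lIn x s /\ y = f x.
Proof.
elim: s => [|x s IH] /=; first by split=> // -[x []].
rewrite IH; split.
- by case=> [<-|[z [h ->]]]; [exists x; split; [left|] | exists z; split; [right|]].
- by case=> z [[<-|h] ->]; [left | right; exists z].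
Qed.

Lemma lIn_map_all (f : A -> B) (P : B -> Prop) s :
  (forall y, lIn y (map f s) -> P y) <-> (forall x, lIn x s -> P (f x)).
Proof.
split=> h.
- by move=> x hx; apply: h; apply/lIn_map; exists x.
- by move=> y /lIn_map [x [hx ->]]; apply: h.
Qed.

Lemma lIn_cat (x : A) s1 s2 : lIn x (s1 ++ s2) <-> lIn x s1 \/ lIn x s2.
Proof. by elim: s1 => [|y s IH] /=; [tauto | rewrite IH; tauto]. Qed.

Lemma lIn_filter (p : pred A) x s : lIn x (filter p s) <-> lIn x s /\ p x.
Proof.
elim: s => [|y s IH] /=; first tauto.
case py: (p y) => /=; rewrite IH; split.
- by case=> [<-|[]]; auto.
- by case=> [[<-|]]; auto.
- by case; auto.
- by case=> [[<-|]] //; rewrite py.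
Qed.

Lemma lIn_flatten (x : A) ss : lIn x (flatten ss) <-> exists s, lIn s ss /\ lIn x s.
Proof.
elim: ss => [|s ss IH] /=; first by split=> // -[s []].
rewrite lIn_cat IH; split.
- by case=> [h|[s' [h1 h2]]]; [exists s; split; [left|] | exists s'; split; [right|]].
- by case=> s' [[<-|h1] h2]; [left | right; exists s'].
Qed.

Lemma lIn_nth (d : A) s x : lIn x s -> exists2 j, j < size s & nth d s j = x.
Proof. by elim: s => [|y s IH] //= [<-|/IH [j h1 h2]]; [exists 0 | exists j.+1]. Qed.

Lemma preimage_list (P : B -> Prop) (f : B -> A) :
  (forall x y, P x -> P y -> f x = f y -> x = y) -> forall s : seq A,
  exists s' : seq B, forall y, P y -> lIn (f y) s -> lIn y s'.
Proof.
move=> f_inj; elim=> [|x s [s' hs']]; first by exists [::].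
case: (classic (exists2 y, P y & f y = x)) => [[y0 Py0 <-]|hx].
- exists (y0 :: s') => y Py /= [/f_inj -> //|/hs' h]; [by left | by right; apply: h].
- exists s' => y Py /= [ex|]; [by case: hx; exists y | exact: hs'].
Qed.

Lemma lift_list (P : B -> Prop) (f : B -> A) (s : seq A) :
  (forall y, lIn y s -> exists2 x, P x & y = f x) ->
  exists xs : seq B, (forall x, lIn x xs -> P x) /\
    forall y, lIn y s -> exists2 x, lIn x xs & y = f x.
Proof.
elim: s => [|y s IH] hs; first by exists [::].
case: IH => [y' h|xs [h1 h2]]; first by apply: hs; right.
case: (hs y (or_introl erefl)) => x px ->; exists (x :: xs); split.
- by move=> x' [<-|/h1].
- move=> y' [<-|/h2 [x' h ->]]; first by exists x; [left|].
  by exists x'; [right|].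
Qed.

End ListMembership.

Lemma ex_maxn_prop (P : nat -> Prop) B : (exists n, P n) -> (forall n, P n -> n <= B) ->
  exists2 N, P N & forall n, P n -> n <= N.
Proof.
move=> [n0 h0] hB.
have ex : exists i, propb (P i) by exists n0; apply/propbP.
have ub i : propb (P i) -> i <= B by move/propbP; apply: hB.
by case: (ex_maxnP ex ub) => i /propbP hi hmax; exists i => // n hn; apply/hmax/propbP.
Qed.

Lemma code_prefix_list (T : Type) (p : T -> Prop) (code : T -> nat) :
  (forall x y, p x -> p y -> code x = code y -> x = y) ->
  forall n, exists s : seq T, forall x, lIn x s <-> p x /\ code x <= n.
Proof.
move=> code_inj.
have level m : exists s : seq T, forall x, lIn x s <-> p x /\ code x = m.
  case: (classic (exists2 x, p x & code x = m)) => [[x0 px0 hx0]|hno].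
    exists [:: x0] => x /=; split=> [[<- //|[]] | [px hx]].
    by left; apply: code_inj => //; rewrite hx hx0.
  by exists [::] => x /=; split=> // -[px hx]; apply: hno; exists x.
elim=> [|n [s hs]].
  by case: (level 0) => s hs; exists s => x; rewrite hs leqn0; split=> -[? /eqP].
case: (level n.+1) => s1 hs1; exists (s ++ s1) => x.
rewrite lIn_cat hs hs1 [code x <= n.+1]leq_eqVlt ltnS; split.
- by case=> -[px h]; split; rewrite // ?h ?eqxx ?orbT.
- by case=> px /orP [/eqP|]; [right | left].
Qed.

Fixpoint lists_over (T : Type) (Q : seq T) (k : nat) : seq (seq T) :=
  if k is k.+1 then flatten (map (fun q => map (cons q) (lists_over Q k)) Q) else [:: [::]].

Lemma lists_over_size (T : Type) (Q : seq T) s :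
  (forall y, lIn y s -> lIn y Q) -> lIn s (lists_over Q (size s)).
Proof.
elim: s => [|y s IH] h /=; first by left.
apply/lIn_flatten; exists (map (cons y) (lists_over Q (size s))); split.
- by apply/lIn_map; exists y; split=> //; apply: h; left.
- by apply/lIn_map; exists s; split=> //; apply: IH => z hz; apply: h; right.
Qed.

Lemma finite_tuples (T : Type) (d : T) (Q : seq T) k :
  exists s : seq ('I_k -> T), forall a, (forall i, lIn (a i) Q) -> lIn a s.
Proof.
exists (map (fun l (i : 'I_k) => nth d l i) (lists_over Q k)) => a ha.
apply/lIn_map; exists (map a (enum 'I_k)); split.
- rewrite -[k in lists_over _ k](size_enum_ord k) -(size_map a); apply: lists_over_size.
  by move=> y /lIn_map [i [_ ->]].
- apply: functional_extensionality => i.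
  by rewrite (nth_map i) ?size_enum_ord // nth_ord_enum.
Qed.

(** * Ultrafilters *)

Section Ultrafilter.
Variables (L : Type) (D : (L -> Prop) -> Prop).
Hypothesis hU : ultrafilter D.

Lemma ufT : D (fun _ => True). Proof. by case: hU. Qed.

Lemma uf_mono X Y : D X -> (forall t, X t -> Y t) -> D Y.
Proof. by case: hU => _ [_ [h _]]; apply: h. Qed.

Lemma uf_and X Y : D X -> D Y -> D (fun t => X t /\ Y t).
Proof. by case: hU => _ [_ [_ [h _]]]; apply: h. Qed.

Lemma uf_neg X : D (fun t => ~ X t) <-> ~ D X.
Proof.
case: hU => _ [hF [_ [_ hdec]]]; split.
- by move=> hN hX; apply: hF; apply: uf_mono (uf_and hX hN) _ => t [].
- by case: (hdec X).
Qed.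

Lemma uf_ext X Y : (forall t, X t <-> Y t) -> D X <-> D Y.
Proof. by move=> h; split=> hh; apply: uf_mono hh _ => t; apply h. Qed.

Lemma uf_list (T : Type) (s : seq T) (P : T -> L -> Prop) :
  (forall x, lIn x s -> D (P x)) -> D (fun t => forall x, lIn x s -> P x t).
Proof.
elim: s => [|y s IH] /= h; first by apply: uf_mono ufT _.
apply: uf_mono (uf_and (h y (or_introl erefl)) (IH (fun x hx => h x (or_intror hx)))) _.
by move=> t [h1 h2] x [<-|hx]; auto.
Qed.

Lemma uf_fin n (P : 'I_n -> L -> Prop) :
  (forall i, D (P i)) -> D (fun t => forall i, P i t).
Proof.
move=> h; apply: uf_mono (uf_list (s := enum 'I_n) (fun x _ => h x)) _.
by move=> t ht i; apply: ht; apply/lIn_mem; rewrite mem_enum.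
Qed.

End Ultrafilter.

Definition regular_family (I L : Type) (D : (L -> Prop) -> Prop) (X : I -> L -> Prop) :=
  (forall i, D (X i)) /\ forall t, exists s : seq I, forall i, X i t -> lIn i s.

Lemma regular_family_comp (I J L : Type) (D : (L -> Prop) -> Prop) (X : I -> L -> Prop)
  (f : J -> I) : injective f -> regular_family D X -> regular_family D (fun j => X (f j)).
Proof.
move=> f_inj [hX hfin]; split=> [j|t]; first exact: hX.
case: (hfin t) => s hs.
case: (@preimage_list _ _ (fun _ => True) f (fun x y _ _ => @f_inj x y) s) => s' hs'.
by exists s' => j hj; apply: hs' => //; apply: hs.
Qed.

Lemma infinite_type_nat_inj (L : Type) : infinite_type L -> exists l : nat -> L, injective l.
Proof.
move=> hinf.
have fresh : forall s : seq L, exists x, ~ lIn x s.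
  move=> s; apply: NNPP => h; apply: hinf; exists s => x.
  by apply: NNPP => hx; apply: h; exists x.
have inh : inhabited L by case: (fresh [::]) => x _; constructor.
pose nx s := epsilon inh (fun x => ~ lIn x s).
have nxP s : ~ lIn (nx s) s := epsilon_spec inh (fun x => ~ lIn x s) (fresh s).
pose fix ls n := if n is n.+1 then nx (ls n) :: ls n else [::].
have hls m n : m < n -> lIn (nx (ls m)) (ls n).
  elim: n => [|n IH] //; rewrite ltnS leq_eqVlt => /orP [/eqP ->|/IH h] /=; by [left | right].
exists (fun n => nx (ls n)) => m n /= e.
case: (ltngtP m n) => // /hls; first by rewrite e => /nxP.
by rewrite -e => /nxP.
Qed.

Lemma regular_ultrafilter_nat_family (L : Type) (D : (L -> Prop) -> Prop) :
  infinite_type L -> regular_ultrafilter D -> exists Z : nat -> L -> Prop, regular_family D Z.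
Proof.
move=> /infinite_type_nat_inj [l l_inj] [_ [X hX]].
by exists (fun n => X (l n)); apply: regular_family_comp.
Qed.

(** * Syntax *)

Section Syntax.
Variable S : sig.

Fixpoint trename (rho : nat -> nat) (t : term S) : term S :=
  match t with
  | Var n => Var (rho n)
  | App f args => App (fun i => trename rho (args i))
  end.

Definition rename_up (rho : nat -> nat) (n : nat) : nat :=
  if n is m.+1 then (rho m).+1 else 0.

Fixpoint frename (rho : nat -> nat) (phi : formula S) : formula S :=
  match phi with
  | Eq t u => Eq (trename rho t) (trename rho u)
  | Rel r args => Rel (fun i => trename rho (args i))
  | Neg p => Neg (frename rho p)
  | And p q => And (frename rho p) (frename rho q)
  | Ex p => Ex (frename (rename_up rho) p)
  end.

Lemma eval_trename (M : structure S) e rho t :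
  eval M e (trename rho t) = eval M (fun n => e (rho n)) t.
Proof.
elim: t => [n|f args IH] //=; congr (funs M f _).
by apply: functional_extensionality => i; apply: IH.
Qed.

Lemma holds_frename (M : structure S) phi : forall e rho,
  holds M e (frename rho phi) <-> holds M (fun n => e (rho n)) phi.
Proof.
elim: phi => [t1 t2|r args|p IH|p IHp q IHq|p IH] e rho /=.
- by rewrite !eval_trename.
- have -> // : (fun i => eval M e (trename rho (args i))) =
               (fun i => eval M (fun n => e (rho n)) (args i)).
  by apply: functional_extensionality => i; rewrite eval_trename.
- by rewrite IH.
- by rewrite IHp IHq.
- have env b : (fun n => scons b e (rename_up rho n)) = scons b (fun n => e (rho n)).
    by apply: functional_extensionality => -[|n].
  by split=> -[b hb]; exists b; move: hb; rewrite IH env.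
Qed.

Lemma tbounded_trename k rho t : (forall m, rho m < k) -> tbounded k (trename rho t).
Proof. by move=> h; elim: t => [n|f args IH] /=. Qed.

Lemma bounded_frename phi : forall k rho, (forall m, rho m < k) -> bounded k (frename rho phi).
Proof.
elim: phi => [t1 t2|r args|p IH|p IHp q IHq|p IH] k rho h /=.
- by split; apply: tbounded_trename.
- by move=> i; apply: tbounded_trename.
- exact: IH.
- by split; [apply: IHp | apply: IHq].
- by apply: IH => -[|m] //=; rewrite ltnS.
Qed.

Lemma eval_tbounded (M : structure S) k e1 e2 t :
  tbounded k t -> (forall i, i < k -> e1 i = e2 i) -> eval M e1 t = eval M e2 t.
Proof.
move=> + h; elim: t => [m|f args IH] /=; first exact: h.
by move=> hb; congr (funs M f _); apply: functional_extensionality => i; apply: IH.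
Qed.

Lemma holds_bounded (M : structure S) phi : forall k e1 e2,
  bounded k phi -> (forall i, i < k -> e1 i = e2 i) -> holds M e1 phi <-> holds M e2 phi.
Proof.
elim: phi => [t1 t2|r args|p IH|p IHp q IHq|p IH] k e1 e2 /= hb h.
- by case: hb => h1 h2; rewrite (eval_tbounded h1 h) (eval_tbounded h2 h).
- have -> // : (fun i => eval M e1 (args i)) = (fun i => eval M e2 (args i)).
  by apply: functional_extensionality => i; apply: eval_tbounded (hb i) h.
- by rewrite (IH k e1 e2).
- by case: hb => h1 h2; rewrite (IHp k e1 e2) // (IHq k e1 e2).
- split=> -[b hh]; exists b; move: hh; rewrite (IH k.+1 (scons b e1) (scons b e2)) //;
  by move=> -[|i] //= /h.
Qed.

Definition ftrue : formula S := Ex (Eq (Var 0) (Var 0)).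

Fixpoint big_and (l : seq (formula S)) : formula S :=
  if l is p :: l then And p (big_and l) else ftrue.

Lemma holds_big_and (M : structure S) e l :
  holds M e (big_and l) <-> forall p, lIn p l -> holds M e p.
Proof.
elim: l => [|p l IH] /=; first by split=> // _; exists (point M).
rewrite IH; split; last by move=> h; split; auto.
by case=> h1 h2 q [<-|hq]; auto.
Qed.

Lemma bounded_big_and k l : (forall p, lIn p l -> bounded k p) -> bounded k (big_and l).
Proof. by elim: l => [|p l IH] //= h; split; auto. Qed.

Fixpoint exists_n (n : nat) (psi : formula S) : formula S :=
  if n is n.+1 then Ex (exists_n n psi) else psi.

Lemma bounded_exists_n psi n : forall k, bounded (k + n) psi -> bounded k (exists_n n psi).
Proof.
elim: n => [|n IH] k /=; first by rewrite addn0.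
by move=> h; apply: IH; rewrite addSnnS.
Qed.

Definition env_shift (M : structure S) (n : nat) (Y e : nat -> M) (m : nat) : M :=
  if m < n then Y m else e (m - n).

Lemma env_shift0 (M : structure S) (Y e : nat -> M) : env_shift 0 Y e = e.
Proof. by apply: functional_extensionality => m; rewrite /env_shift subn0. Qed.

Lemma env_shiftS (M : structure S) n (Y e : nat -> M) :
  env_shift n Y (scons (Y n) e) = env_shift n.+1 Y e.
Proof.
apply: functional_extensionality => m; rewrite /env_shift.
case: (ltngtP m n) => hm; first by rewrite ltnS ltnW.
- by rewrite ltnS leqNgt hm /= -(subnSK hm).
- by rewrite hm ltnSn subnn.
Qed.

Lemma holds_exists_n (M : structure S) psi n : forall e,
  holds M e (exists_n n psi) <-> exists Y : nat -> M, holds M (env_shift n Y e) psi.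
Proof.
elim: n => [|n IH] e /=.
  by split=> [h|[Y]]; [exists e | ]; rewrite env_shift0.
split=> [[b /IH [Y]]|[Y hY]].
- pose Y' m := if m < n then Y m else b.
  have -> : b = Y' n by rewrite /Y' ltnn.
  have -> : env_shift n Y (scons (Y' n) e) = env_shift n Y' (scons (Y' n) e).
    by apply: functional_extensionality => m; rewrite /env_shift /Y'; case: ifP.
  by exists Y'; rewrite -env_shiftS.
- by exists (Y n); apply/IH; exists Y; rewrite env_shiftS.
Qed.

End Syntax.

Section FormulaCode.
Variables (S : sig) (fe : Defs.fsym S -> nat) (re : rsym S -> nat).
Hypotheses (fe_inj : injective fe) (re_inj : injective re).

Fixpoint tenc (t : term S) : GenTree.tree nat :=
  match t with
  | Var n => GenTree.Node 0 [:: GenTree.Leaf n]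
  | App f args =>
    GenTree.Node 1 (GenTree.Leaf (fe f) :: [seq tenc (args i) | i <- enum 'I_(farity f)])
  end.

Lemma tenc_inj : injective tenc.
Proof.
elim=> [n|f args IH] [m|g args2] //=; first by case=> ->.
case=> /fe_inj ef; subst g => /eq_in_map hm; congr App.
by apply: functional_extensionality => i; apply/IH/hm; rewrite mem_enum.
Qed.

Fixpoint fenc (phi : formula S) : GenTree.tree nat :=
  match phi with
  | Eq t u => GenTree.Node 2 [:: tenc t; tenc u]
  | Rel r args =>
    GenTree.Node 3 (GenTree.Leaf (re r) :: [seq tenc (args i) | i <- enum 'I_(rarity r)])
  | Neg p => GenTree.Node 4 [:: fenc p]
  | And p q => GenTree.Node 5 [:: fenc p; fenc q]
  | Ex p => GenTree.Node 6 [:: fenc p]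
  end.

Lemma fenc_inj : injective fenc.
Proof.
elim=> [t1 t2|r args|p IH|p IHp q IHq|p IH] [u1 u2|r2 args2|p2|p2 q2|p2] //=.
- by case=> /tenc_inj -> /tenc_inj ->.
- case=> /re_inj er; subst r2 => /eq_in_map hm; congr Rel.
  by apply: functional_extensionality => i; apply/tenc_inj/hm; rewrite mem_enum.
- by case=> /IH ->.
- by case=> /IHp -> /IHq ->.
- by case=> /IH ->.
Qed.

Definition fcode (M : structure S) (x : entry M) : nat := pickle (projT1 x, fenc (projT2 x).1).

Lemma entries_finite (M : structure S) (ns : seq nat) (Q : seq M) :
  exists s : seq (entry M), forall x : entry M,
    lIn (fcode x) ns -> (forall i, lIn ((projT2 x).2 i) Q) -> lIn x s.
Proof.
elim: ns => [|n ns [s hs]]; first by exists [::].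
case: (classic (exists x : entry M, fcode x = n)) => [[[k [phi ?]] hn]|hno]; last first.
  by exists s => x /= [ex|]; [case: hno; exists x | apply: hs].
case: (finite_tuples (point M) Q k) => ts hts.
exists ([seq existT _ k (phi, a) | a <- ts] ++ s) => -[k' [phi' a]] /= [ex|hx] ha.
- move: ex; rewrite -hn => /(pcan_inj pickleK) [ek /fenc_inj ephi]; subst k' phi'.
  by apply/lIn_cat; left; apply/lIn_map; exists a; split=> //; apply: hts.
- by apply/lIn_cat; right; apply: hs hx ha.
Qed.

End FormulaCode.

Definition envI (T : Type) n (a : 'I_n -> T) (d : T) (m : nat) : T :=
  if (insub m : option 'I_n) is Some i then a i else d.

Lemma envI_ord (T : Type) n (a : 'I_n -> T) d (i : 'I_n) : envI a d i = a i.
Proof. by rewrite /envI valK. Qed.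

Lemma envI_lt (T : Type) n (a : 'I_n -> T) d m (h : m < n) : envI a d m = a (Ordinal h).
Proof. by rewrite /envI insubT. Qed.

Lemma envI_ge (T : Type) n (a : 'I_n -> T) d m : n <= m -> envI a d m = d.
Proof. by move=> h; rewrite /envI insubF // ltnNge h. Qed.

Definition env2 (T : Type) (x y : T) : nat -> T := scons x (scons y (fun _ => x)).

Section Environments.
Variables (S : sig) (M : structure S).

Lemma holdsT_envI (phi : formula S) n (a : 'I_n -> M) d :
  bounded n phi -> holdsT M phi a <-> holds M (envI a d) phi.
Proof.
move=> hb; split=> [h|h e he]; first by apply: h => i; rewrite envI_ord.
by apply/(holds_bounded (e1 := envI a d) hb) => // i hi; rewrite envI_lt -he.
Qed.

Lemma holdsG_envI (phi : formula S) n (a : 'I_n -> M) b :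
  bounded n.+1 phi -> holdsG M phi a b <-> holds M (envI a b) phi.
Proof.
move=> hb; split=> [h|h e he hn]; first by apply: h => [i|]; rewrite ?envI_ord ?envI_ge.
apply/(holds_bounded (e1 := envI a b) hb) => // i; rewrite ltnS leq_eqVlt.
by case/orP=> [/eqP ->|hi]; [rewrite envI_ge | rewrite (envI_lt _ _ hi) -he].
Qed.

Lemma holds2_env2 (phi : formula S) x y :
  bounded 2 phi -> holds2 M phi x y <-> holds M (env2 x y) phi.
Proof.
move=> hb; split=> [|h e h0 h1]; first by apply.
by apply/(holds_bounded (e1 := env2 x y) hb) => // -[|[|i]].
Qed.

End Environments.

(** * Ultrapowers and Łoś's theorem *)

Definition ultrapower_map (L : Type) (D : (L -> Prop) -> Prop) (S : sig)
  (M U : structure S) (pi : (L -> M) -> U) : Prop :=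
  (forall u : U, exists f, pi f = u) /\
  (forall f g, pi f = pi g <-> D (fun t => f t = g t)) /\
  (forall r (a : 'I_(rarity r) -> L -> M),
      rels U r (fun i => pi (a i)) <-> D (fun t => rels M r (fun i => a i t))) /\
  (forall f (a : 'I_(farity f) -> L -> M),
      funs U f (fun i => pi (a i)) = pi (fun t => funs M f (fun i => a i t))).
Arguments ultrapower_map {L} D {S} M U pi.

Section Los.
Variables (L : Type) (D : (L -> Prop) -> Prop) (S : sig) (M U : structure S).
Variable pi : (L -> M) -> U.
Hypotheses (hU : ultrafilter D) (hpi : ultrapower_map D M U pi).

Lemma ultrapower_eq f g : pi f = pi g <-> D (fun t => f t = g t).
Proof. by case: hpi => _ []. Qed.

Lemma ultrapower_rels r (a : 'I_(rarity r) -> L -> M) :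
  rels U r (fun i => pi (a i)) <-> D (fun t => rels M r (fun i => a i t)).
Proof. by case: hpi => _ [_ []]. Qed.

Lemma ultrapower_funs f (a : 'I_(farity f) -> L -> M) :
  funs U f (fun i => pi (a i)) = pi (fun t => funs M f (fun i => a i t)).
Proof. by case: hpi => _ [_ [_]]. Qed.

Definition rep (u : U) : L -> M := epsilon (inhabits (fun _ => point M)) (fun f => pi f = u).

Lemma repK u : pi (rep u) = u.
Proof. by case: hpi => hs _; apply: (epsilon_spec (inhabits _) (fun f => pi f = u)). Qed.

Lemma rep_pi f : D (fun t => rep (pi f) t = f t).
Proof. by apply/ultrapower_eq; rewrite repK. Qed.

Lemma los_eval (rho : nat -> L -> M) (tm : term S) :
  eval U (fun n => pi (rho n)) tm = pi (fun t => eval M (fun n => rho n t) tm).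
Proof.
elim: tm => [n|f args IH] //=; rewrite -ultrapower_funs.
by congr (funs U f _); apply: functional_extensionality => i; rewrite IH.
Qed.

Lemma scons_pi (g : L -> M) (rho : nat -> L -> M) :
  scons (pi g) (fun n => pi (rho n)) = (fun n => pi (fun t => scons (g t) (fun m => rho m t) n)).
Proof. by apply: functional_extensionality => -[|n]. Qed.

Theorem los (phi : formula S) : forall rho : nat -> L -> M,
  holds U (fun n => pi (rho n)) phi <-> D (fun t => holds M (fun n => rho n t) phi).
Proof.
elim: phi => [t1 t2|r args|p IH|p IHp q IHq|p IH] rho /=.
- by rewrite !los_eval ultrapower_eq.
- rewrite -ultrapower_rels; have -> // : (fun i => eval U (fun n => pi (rho n)) (args i)) =
      (fun i => pi (fun t => eval M (fun n => rho n t) (args i))).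
  by apply: functional_extensionality => i; rewrite los_eval.
- by rewrite IH (uf_neg hU).
- rewrite IHp IHq; split=> [[h1 h2]|h]; first exact: uf_and.
  by split; apply: (uf_mono hU) h _ => t [].
- split=> [[b]|h].
  + rewrite -(repK b) scons_pi IH => h; apply: (uf_mono hU) h _ => t ht.
    by exists (rep b t).
  + pose g t := epsilon (carrier_inh M) (fun c => holds M (scons c (fun n => rho n t)) p).
    exists (pi g); rewrite scons_pi IH; apply: (uf_mono hU) h _ => t.
    exact: epsilon_spec.
Qed.

Lemma los_holds (phi : formula S) (e : nat -> U) :
  holds U e phi <-> D (fun t => holds M (fun n => rep (e n) t) phi).
Proof.
rewrite -los; have -> // : (fun n => pi (rep (e n))) = e.
by apply: functional_extensionality => n; rewrite repK.
Qed.

Lemma penv_pi k (c : L -> M) (g : 'I_k -> L -> M) :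
  penv (pi c) (fun i => pi (g i)) = (fun n => pi (fun t => penv (c t) (fun i => g i t) n)).
Proof. by apply: functional_extensionality => -[|n] //=; case: insub. Qed.

Lemma envI_pi k (g : 'I_k -> L -> M) (d : L -> M) :
  envI (fun i => pi (g i)) (pi d) = (fun n => pi (fun t => envI (fun i => g i t) (d t) n)).
Proof. by apply: functional_extensionality => n; rewrite /envI; case: insub. Qed.

Lemma env2_pi (f g : L -> M) :
  env2 (pi f) (pi g) = (fun n => pi (fun t => env2 (f t) (g t) n)).
Proof. by apply: functional_extensionality => -[|[|n]]. Qed.

Lemma los_entry (x : entry U) (c : L -> M) :
  holds_entry (pi c) x <->
  D (fun t => holds M (penv (c t) (fun i => rep ((projT2 x).2 i) t)) (projT2 x).1).
Proof.
rewrite /holds_entry -los -penv_pi.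
have -> // : (fun i => pi (rep ((projT2 x).2 i))) = (projT2 x).2.
by apply: functional_extensionality => i; rewrite repK.
Qed.

Lemma ultrapower_models (T : formula S -> Prop) : models M T -> models U T.
Proof.
move=> hM phi hphi e; apply/los_holds; apply: (uf_mono hU) (ufT hU) _ => t _.
exact: hM.
Qed.

End Los.

Section UltrapowerConstruction.
Variables (L : Type) (D : (L -> Prop) -> Prop) (S : sig) (M : structure S).
Hypothesis hU : ultrafilter D.

Definition ucls (f : L -> M) : (L -> M) -> Prop := fun g => D (fun t => f t = g t).

Definition ucarrier := {P : (L -> M) -> Prop | exists f, P = ucls f}.

Definition upi (f : L -> M) : ucarrier := exist _ (ucls f) (ex_intro _ f erefl).

Lemma ucarrier_eq (u v : ucarrier) : proj1_sig u = proj1_sig v -> u = v.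
Proof. by case: u => P hP; case: v => Q hQ /= ePQ; subst Q; f_equal; apply: proof_irrelevance. Qed.

Lemma upi_surj (u : ucarrier) : exists f, upi f = u.
Proof. by case: u => P [f hf]; exists f; apply: ucarrier_eq. Qed.

Lemma upi_eq f g : upi f = upi g <-> D (fun t => f t = g t).
Proof.
split=> [/(f_equal (@proj1_sig _ _)) /= efg | h].
  have : ucls f f by apply: (uf_mono hU) (ufT hU) _.
  by rewrite efg => hgf; apply: (uf_mono hU) hgf _.
apply: ucarrier_eq => /=; apply: functional_extensionality => k.
apply: propositional_extensionality.
by split=> hk; apply: (uf_mono hU) (uf_and hU h hk) _ => t [-> ->].
Qed.

Definition urep (u : ucarrier) : L -> M :=
  epsilon (inhabits (fun _ => point M)) (fun f => upi f = u).

Lemma urepK u : upi (urep u) = u.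
Proof. exact: (epsilon_spec (inhabits _) (fun f => upi f = u) (upi_surj u)). Qed.

Lemma urep_upi n (a : 'I_n -> L -> M) : D (fun t => forall i, urep (upi (a i)) t = a i t).
Proof. by apply: (uf_fin hU) => i; apply/upi_eq; rewrite urepK. Qed.

Definition ultrapower : structure S := {|
  carrier := ucarrier;
  carrier_inh := inhabits (upi (fun _ => point M));
  funs := fun f args => upi (fun t => funs M f (fun i => urep (args i) t));
  rels := fun r args => D (fun t => rels M r (fun i => urep (args i) t)) |}.

Lemma ultrapower_upi : ultrapower_map D M ultrapower upi.
Proof.
split; first exact: upi_surj.
split; first exact: upi_eq.
have pointwise n (a : 'I_n -> L -> M) :
    D (fun t => (fun i => urep (upi (a i)) t) = (fun i => a i t)).
  by apply: (uf_mono hU) (urep_upi a) _ => t ht; apply: functional_extensionality.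
split=> [r a | f a] /=.
- split=> h; apply: (uf_mono hU) (uf_and hU (pointwise _ a) h) _ => t [e].
    by rewrite -e.
  by rewrite e.
- by apply/upi_eq; apply: (uf_mono hU) (pointwise _ a) _ => t ->.
Qed.

End UltrapowerConstruction.

Lemma realized_of_local (L : Type) (D : (L -> Prop) -> Prop) (S : sig) (M U : structure S)
  (pi : (L -> M) -> U) (p : entry U -> Prop) (loc : entry U -> L -> M -> Prop)
  (Y : entry U -> L -> Prop) :
  ultrafilter D ->
  (forall x c, p x -> D (fun t => loc x t (c t)) -> holds_entry (pi c) x) ->
  (forall x, p x -> D (Y x)) ->
  (forall t, exists c, forall x, p x -> Y x t -> loc x t c) -> realized p.
Proof.
move=> hU hloc hY hc.
pose beta t := epsilon (carrier_inh M) (fun c => forall x, p x -> Y x t -> loc x t c).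
exists (pi beta) => x px; apply: hloc => //; apply: (uf_mono hU) (hY x px) _ => t hYt.
exact: (epsilon_spec _ _ (hc t)).
Qed.

(** * Countable saturation of ultrapowers *)

Lemma countable_type_code (S : sig) (M : structure S) (A : M -> Prop) (p : entry M -> Prop) :
  countable_sig S -> aleph1_small {x | A x} -> type_over A p ->
  exists code : entry M -> nat, forall x y, p x -> p y -> code x = code y -> x = y.
Proof.
move=> [[fe fe_inj] [re re_inj]] [e e_inj] hp.
pose e' (v : M) := if excluded_middle_informative (A v) is left h then e (exist _ v h) else 0.
have e'_inj u v : A u -> A v -> e' u = e' v -> u = v.
  rewrite /e' => hu hv; case: excluded_middle_informative => // hu'.
  by case: excluded_middle_informative => // hv' /e_inj [].
exists (fun x => pickle (fcode fe re x, [seq e' ((projT2 x).2 i) | i <- enum 'I_(projT1 x)])).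
move=> [k [phi a]] [k' [phi' a']] /hp [_ ha] /hp [_ ha'] /= /(pcan_inj pickleK) [].
move=> /(pcan_inj pickleK) [ek /(fenc_inj fe_inj re_inj) ephi]; subst k' phi' => /eq_in_map hm.
congr existT; congr pair; apply: functional_extensionality => i.
by apply: e'_inj; [apply: ha | apply: ha' | apply/hm; rewrite mem_enum].
Qed.

Lemma ultrapower_aleph1_saturated (L : Type) (D : (L -> Prop) -> Prop) (Z : nat -> L -> Prop)
  (S : sig) (M U : structure S) (pi : (L -> M) -> U) :
  ultrafilter D -> regular_family D Z -> countable_sig S ->
  ultrapower_map D M U pi -> saturated aleph1_small U.
Proof.
move=> hU [hZ Z_fin] hS hpi A hA p hp hfs.
case: (countable_type_code hS hA hp) => code code_inj.
pose loc (x : entry U) t c :=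
  holds M (penv c (fun i => rep pi ((projT2 x).2 i) t)) (projT2 x).1.
pose stage n t := exists c, forall x, p x -> code x <= n -> loc x t c.
have hstage n : D (stage n).
  case: (code_prefix_list code_inj n) => s hs.
  case: (hfs s) => [x /hs [] //|b hb].
  have : D (fun t => forall x, lIn x s -> loc x t (rep pi b t)).
    by apply: (uf_list hU) => x /hb; rewrite -{1}(repK hpi b) (los_entry hU hpi).
  by move=> h; apply: (uf_mono hU) h _ => t ht; exists (rep pi b t) => x px hx; apply/ht/hs.
apply: (@realized_of_local _ D _ M U pi p loc (fun x t => Z (code x) t /\ stage (code x) t) hU).
- by move=> x c _; rewrite (los_entry hU hpi).
- by move=> x _; apply: uf_and.
(* At [t] only finitely many codes [n] satisfy [Z n t], and a witness for the stage of the
   largest relevant one realizes every relevant formula. *)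
move=> t; case: (classic (exists2 x, p x & Z (code x) t /\ stage (code x) t)) => [hex|hno];
  last by exists (point M) => x px hx; case: hno; exists x.
case: (Z_fin t) => ns hns.
pose P n := exists2 x, p x & [/\ Z (code x) t, stage (code x) t & code x = n].
case: (@ex_maxn_prop P (\max_(n <- ns) n)).
- by case: hex => x px [hz hs]; exists (code x); exists x.
- move=> n [x _ [hz _ <-]]; apply: (@leq_bigmax_seq _ _ xpredT id) => //.
  exact/lIn_mem/hns.
move=> N [x0 _ [_ [c hc] <-]] hmax; exists c => x px [hz hs]; apply: hc => //.
by apply: hmax; exists x.
Qed.

(** * Keisler's transfer of saturation *)

Fixpoint sublists (T : Type) (l : seq T) : seq (seq T) :=
  if l is x :: l then sublists l ++ map (cons x) (sublists l) else [:: [::]].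

Lemma filter_sublists (T : Type) (p : pred T) l : lIn (filter p l) (sublists l).
Proof.
elim: l => [|x l IH] /=; first by left.
apply/lIn_cat; case: (p x); last by left.
by right; apply/lIn_map; exists (filter p l).
Qed.

Lemma lIn_sublists (T : Type) (l w : seq T) x : lIn w (sublists l) -> lIn x w -> lIn x l.
Proof.
elim: l w => [|y l IH] w /=; first by case=> // <-.
case/lIn_cat => [h hx|/lIn_map [w' [h ->]] /= [<-|hx]]; [right | left | right] => //.
- exact: IH h hx.
- exact: IH h hx.
Qed.

Definition sentence_transfer (S : sig) (K M : structure S) : Prop :=
  forall sigma, sentence sigma -> (forall e, holds K e sigma) -> forall e, holds M e sigma.

Lemma complete_sentence_transfer (S : sig) (T : formula S -> Prop) (K M : structure S) :
  complete_theory T -> models K T -> models M T -> sentence_transfer K M.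
Proof.
move=> [_ [_ hdec]] hK hM sigma hs hsK e.
case: (hdec sigma hs) => [/(_ M hM)|/(_ K hK (fun _ => point K))] //.
by case; apply: hsK.
Qed.

Definition realizable (S : sig) (V N : structure S) (r : V -> N) (w : seq (entry V)) : Prop :=
  exists v : N, forall x, lIn x w -> holds N (penv v (fun i => r ((projT2 x).2 i))) (projT2 x).1.
Arguments realizable {S V} N r w.

Section Pattern.
Variables (S : sig) (K M V : structure S).
Hypothesis HE : sentence_transfer K M.
Variables (F : seq (entry V)) (rK : V -> K).

Definition params : seq V :=
  flatten [seq [seq (projT2 x).2 i | i <- enum 'I_(projT1 x)] | x <- F].

Lemma params_entry (x : entry V) i : lIn x F -> lIn ((projT2 x).2 i) params.
Proof.
move=> hx; apply/lIn_flatten.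
exists [seq (projT2 x).2 i | i <- enum 'I_(projT1 x)]; split; apply/lIn_map.
- by exists x.
- by exists i; split=> //; apply/lIn_mem; rewrite mem_enum.
Qed.

Definition idx (v : V) : nat := find (fun u => propb (u = v)) params.

Lemma nth_idx v : lIn v params -> nth (point V) params (idx v) = v.
Proof.
move=> hv; apply/propbP; apply: (@nth_find _ _ (fun u => propb (u = v))).
by apply/(has_nthP (point V)); case: (lIn_nth (point V) hv) => j hj <-; exists j => //;
  apply/propbP.
Qed.

(* One variable per parameter plus a spare one, as [idx v = size params] when [v] is not a
   parameter. *)
Definition nvars : nat := (size params).+1.

Definition renaming (x : entry V) (m : nat) : nat :=
  if m is j.+1 then
    if (insub j : option 'I_(projT1 x)) is Some i then (idx ((projT2 x).2 i)).+1 else 0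
  else 0.

Definition realizable_form (w : seq (entry V)) : formula S :=
  Ex (big_and [seq frename (renaming x) (projT2 x).1 | x <- w]).

Lemma bounded_realizable_form w : bounded nvars (realizable_form w).
Proof.
apply: bounded_big_and => _ /lIn_map [x [_ ->]]; apply: bounded_frename => -[|j] //=.
by case: insub => // i; rewrite !ltnS find_size.
Qed.

Lemma holds_realizable_form (N : structure S) (Y e : nat -> N) w :
  holds N (env_shift nvars Y e) (realizable_form w) <-> realizable N (fun v => Y (idx v)) w.
Proof.
have env v (x : entry V) : (fun n => scons v (env_shift nvars Y e) (renaming x n)) =
                           penv v (fun i => Y (idx ((projT2 x).2 i))).
  apply: functional_extensionality => -[|m] //=; case: insub => [i|] //=.
  by rewrite /env_shift ltnS find_size.
split=> -[v hv]; exists v.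
- move/holds_big_and: hv; rewrite lIn_map_all => hv x hx.
  by have := hv x hx; rewrite holds_frename env.
- by apply/holds_big_and; rewrite lIn_map_all => x hx; rewrite holds_frename env; apply: hv.
Qed.

Lemma realizable_ext (N : structure S) (r1 r2 : V -> N) w :
  (forall x, lIn x w -> forall i, r1 ((projT2 x).2 i) = r2 ((projT2 x).2 i)) ->
  realizable N r1 w <-> realizable N r2 w.
Proof.
move=> h; have e x : lIn x w -> (fun i => r1 ((projT2 x).2 i)) = (fun i => r2 ((projT2 x).2 i)).
  by move=> hx; apply: functional_extensionality; apply: h.
by split=> -[v hv]; exists v => x hx; [rewrite -e | rewrite e] => //; apply: hv.
Qed.

Definition K_assignment (m : nat) : K := rK (nth (point V) params m).

Lemma realizable_K_assignment w : lIn w (sublists F) ->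
  realizable K (fun v => K_assignment (idx v)) w <-> realizable K rK w.
Proof.
move=> hw; apply: realizable_ext => x hx i.
by rewrite /K_assignment nth_idx //; apply/params_entry/(lIn_sublists hw).
Qed.

(* The parameters can be chosen so that exactly the sublists of [F] that are realizable in [K]
   are realizable. *)
Definition pattern : formula S :=
  exists_n nvars (big_and [seq if propb (realizable K rK w) then realizable_form w
                               else Neg (realizable_form w) | w <- sublists F]).

Lemma pattern_sentence : sentence pattern.
Proof.
apply: bounded_exists_n; rewrite add0n; apply: bounded_big_and => _ /lIn_map [w [_ ->]].
by case: propb; apply: bounded_realizable_form.
Qed.

Lemma holds_pattern_K e : holds K e pattern.
Proof.
apply/holds_exists_n; exists K_assignment; apply/holds_big_and => _ /lIn_map [w [hw ->]].
case: propbP => h; first by apply/holds_realizable_form/realizable_K_assignment.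
by move=> /holds_realizable_form /(realizable_K_assignment hw).
Qed.

Lemma realizable_transfer : exists f : V -> M, forall w, lIn w (sublists F) ->
  realizable K rK w <-> realizable M f w.
Proof.
have := HE pattern_sentence holds_pattern_K (fun _ => point M).
move/holds_exists_n => [Y /holds_big_and hY]; exists (fun v => Y (idx v)) => w hw.
have := hY _ (proj2 (lIn_map _ _ _) (ex_intro _ w (conj hw erefl))).
case: propbP => h; first by move/holds_realizable_form.
by move=> hn; split=> // hM; case: hn; apply/holds_realizable_form.
Qed.

End Pattern.

Lemma card_le_image (L A B : Type) (P : A -> Prop) (f : A -> B) :
  card_le L {x | P x} -> card_le L {y | exists x, P x /\ y = f x}.
Proof.
move=> [e e_inj].
pose pick (y : {y | exists x, P x /\ y = f x}) :=
  constructive_indefinite_description _ (proj2_sig y).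
exists (fun y => e (exist _ _ (proj1 (proj2_sig (pick y))))) => y1 y2 /e_inj [] e12.
have ey : proj1_sig y1 = proj1_sig y2.
  by rewrite (proj2 (proj2_sig (pick y1))) (proj2 (proj2_sig (pick y2))) e12.
clear e12; case: y1 ey => y1 ?; case: y2 => y2 ? /= ey; subst y2.
by f_equal; apply: proof_irrelevance.
Qed.

Lemma type_regular_family (L : Type) (D : (L -> Prop) -> Prop) (X : L -> L -> Prop)
  (Z : nat -> L -> Prop) (S : sig) (V : structure S) (A : V -> Prop) (p : entry V -> Prop) :
  ultrafilter D -> regular_family D X -> regular_family D Z -> countable_sig S ->
  card_le L {v | A v} -> type_over A p ->
  exists Y : entry V -> L -> Prop, (forall x, p x -> D (Y x)) /\
    forall t, exists s, forall x, p x -> Y x t -> lIn x s.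
Proof.
move=> hU [hX X_fin] [hZ Z_fin] [[fe fe_inj] [re re_inj]] [e e_inj] hp.
exists (fun x t => Z (fcode fe re x) t /\
  forall i, exists h : A ((projT2 x).2 i), X (e (exist _ _ h)) t); split.
  move=> x /hp [_ hA]; apply: (uf_and hU (hZ _)); apply: (uf_fin hU) => i.
  by apply: (uf_mono hU) (hX (e (exist _ _ (hA i)))) _ => t ht; exists (hA i).
move=> t; case: (Z_fin t) => ns hns; case: (X_fin t) => ls hls.
case: (@preimage_list _ _ (fun _ => True) e (fun x y _ _ => @e_inj x y) ls) => Q hQ.
case: (entries_finite fe_inj re_inj ns [seq proj1_sig v | v <- Q]) => s hs.
exists s => x _ [/hns hz hparams]; apply: hs => // i.
case: (hparams i) => h /hls /(hQ _ I) hv.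
by apply/lIn_map; exists (exist _ _ h).
Qed.

Section KeislerTransfer.
Variables (L : Type) (D : (L -> Prop) -> Prop) (S : sig) (K M V W : structure S).
Variables (piK : (L -> K) -> V) (piM : (L -> M) -> W).
Hypotheses (hU : ultrafilter D) (HE : sentence_transfer K M)
  (hK : ultrapower_map D K V piK) (hM : ultrapower_map D M W piM).
Variables (p : entry V -> Prop) (Y : entry V -> L -> Prop).
Hypotheses (hY : forall x, p x -> D (Y x))
  (Y_fin : forall t, exists s, forall x, p x -> Y x t -> lIn x s).

Definition fragment (t : L) : seq (entry V) :=
  epsilon (inhabits [::]) (fun s => forall x, p x -> Y x t -> lIn x s).

Lemma fragmentP t x : p x -> Y x t -> lIn x (fragment t).
Proof. exact: (epsilon_spec (inhabits [::]) _ (Y_fin t)). Qed.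

Definition copy (t : L) : V -> M :=
  epsilon (inhabits (fun _ => point M)) (fun f => forall w, lIn w (sublists (fragment t)) ->
    realizable K (fun v => rep piK v t) w <-> realizable M f w).

Lemma copyP t (P : pred (entry V)) :
  realizable K (fun v => rep piK v t) (filter P (fragment t)) <->
  realizable M (copy t) (filter P (fragment t)).
Proof.
apply: (epsilon_spec (inhabits _) _ (realizable_transfer HE _ _)).
exact: filter_sublists.
Qed.

Definition image (v : V) : W := piM (fun t => copy t v).

Definition transport (x : entry V) : entry W :=
  existT _ (projT1 x) ((projT2 x).1, fun i => image ((projT2 x).2 i)).

Definition transported (y : entry W) : Prop := exists2 x, p x & y = transport x.

Lemma transport_type_over (A : V -> Prop) :
  type_over A p -> type_over (fun w => exists v, A v /\ w = image v) transported.
Proof.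
move=> hp _ [x /hp [hb hA] ->]; split=> // i.
by exists ((projT2 x).2 i).
Qed.

Lemma holds_transport (x : entry V) (c : L -> M) :
  holds_entry (piM c) (transport x) <->
  D (fun t => holds M (penv (c t) (fun i => copy t ((projT2 x).2 i))) (projT2 x).1).
Proof. by rewrite /holds_entry /= penv_pi (los hU hM). Qed.

Lemma transported_fin_sat : fin_sat p -> fin_sat transported.
Proof.
move=> hfs s /lift_list [xs [xs_p xs_s]].
case: (hfs xs xs_p) => b hb.
pose good t := forall x, lIn x xs -> Y x t /\
  holds K (penv (rep piK b t) (fun i => rep piK ((projT2 x).2 i) t)) (projT2 x).1.
apply: (@realized_of_local _ D _ M W piM (fun y => lIn y s)
  (fun y t c => forall x, lIn x xs -> y = transport x ->
     holds M (penv c (fun i => copy t ((projT2 x).2 i))) (projT2 x).1) (fun _ => good) hU).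
- move=> y c hy; case: (xs_s y hy) => x hx -> h; apply/holds_transport.
  by apply: (uf_mono hU) h _ => t /(_ x hx erefl).
- move=> _ _; apply: (uf_list hU) => x hx; apply: (uf_and hU (hY (xs_p x hx))).
  by have := hb x hx; rewrite -{1}(repK hK b) (los_entry hU hK).
move=> t; case: (classic (good t)) => hg; last by exists (point M).
have /copyP [c hc] :
    realizable K (fun v => rep piK v t) (filter (fun x => propb (lIn x xs)) (fragment t)).
  by exists (rep piK b t) => x /lIn_filter [_ /propbP /hg []].
exists c => y _ _ x hx _; apply: hc; apply/lIn_filter.
by split; [apply: fragmentP (xs_p x hx) (proj1 (hg x hx)) | apply/propbP].
Qed.

Lemma realized_transport : realized transported -> realized p.
Proof.
case=> bW hbW.
pose holdsM (x : entry V) t :=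
  holds M (penv (rep piM bW t) (fun i => copy t ((projT2 x).2 i))) (projT2 x).1.
apply: (@realized_of_local _ D _ K V piK p
  (fun x t c => holds K (penv c (fun i => rep piK ((projT2 x).2 i) t)) (projT2 x).1)
  (fun x t => Y x t /\ holdsM x t) hU).
- by move=> x c _ h; apply/(los_entry hU hK).
- move=> x px; apply: (uf_and hU (hY px)).
  by have := hbW _ (ex_intro2 _ _ x px erefl); rewrite -(repK hM bW) holds_transport.
move=> t; have /copyP [c hc] :
    realizable M (copy t) (filter (fun x => propb (holdsM x t)) (fragment t)).
  by exists (rep piM bW t) => x /lIn_filter [_ /propbP].
exists c => x px [hYx hMx]; apply: hc; apply/lIn_filter.
by split; [apply: fragmentP | apply/propbP].
Qed.

End KeislerTransfer.

Theorem ultrapower_saturation_transfer (L : Type) (D : (L -> Prop) -> Prop) (S : sig)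
  (K M V W : structure S) (piK : (L -> K) -> V) (piM : (L -> M) -> W) :
  regular_ultrafilter D -> infinite_type L -> countable_sig S -> sentence_transfer K M ->
  ultrapower_map D K V piK -> ultrapower_map D M W piM ->
  saturated (card_le L) W -> saturated (card_le L) V.
Proof.
move=> hD hinf hS HE hK hM hW A hA p hp hfs.
case: (regular_ultrafilter_nat_family hinf hD) => Z hZ.
case: hD => hU [X hX].
case: (type_regular_family hU hX hZ hS hA hp) => Y [hY Y_fin].
apply: (realized_transport hU HE hK hM hY Y_fin).
apply: (hW _ (card_le_image (image piK piM p Y) hA)).
- exact: transport_type_over hp.
- exact (transported_fin_sat hU HE hK hM hY Y_fin hfs).
Qed.

(** * Interpretations and the theorem *)

Section InterpretationUltrapower.
Variables (L : Type) (D : (L -> Prop) -> Prop) (S0 S : sig) (I : interpretation S0 S).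
Variables (Ms UMs : structure S) (K N : structure S0).
Variables (piM : (L -> Ms) -> UMs) (piK : (L -> K) -> N).
Hypotheses (hU : ultrafilter D)
  (hM : ultrapower_map D Ms UMs piM) (hK : ultrapower_map D K N piK).
Hypotheses (b_eq : bounded 2 (i_eq I)) (b_rel : forall r, bounded (rarity r) (i_rel I r))
  (b_fun : forall f, bounded (farity f).+1 (i_fun I f)).

Lemma los_holds2 (x y : L -> Ms) :
  holds2 UMs (i_eq I) (piM x) (piM y) <-> D (fun t => holds2 Ms (i_eq I) (x t) (y t)).
Proof.
rewrite holds2_env2 // env2_pi (los hU hM).
by apply: (uf_ext hU) => t; rewrite holds2_env2.
Qed.

Lemma rep_fun n (a : 'I_n -> N) : (fun i => piK (rep piK (a i))) = a.
Proof. by apply: functional_extensionality => i; rewrite (repK hK). Qed.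

Lemma is_interp_ultrapower : is_interp I Ms K -> is_interp I UMs N.
Proof.
move=> [g [g_eq [g_onto [g_rels g_funs]]]].
pose h (u : N) := piM (fun t => g (rep piK u t)).
have eqN (a b : N) : a = b <-> D (fun t => rep piK a t = rep piK b t).
  by rewrite -(ultrapower_eq hK) !(repK hK).
exists h; split; [|split; [|split]].
- by move=> a b; rewrite los_holds2 eqN; apply: (uf_ext hU) => t; apply: g_eq.
- move=> m; rewrite -(repK hM m) los_holds2 => hm.
  pose c t := epsilon (carrier_inh K) (fun c => holds2 Ms (i_eq I) (g c) (rep piM m t)).
  exists (piK c); rewrite los_holds2.
  apply: (uf_mono hU) (uf_and hU (rep_pi hK c) hm) _ => t [-> /g_onto hc].
  exact: epsilon_spec hc.
- move=> r a; rewrite -{1}(rep_fun a) (ultrapower_rels hK).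
  rewrite (holdsT_envI _ (piM (fun _ => point Ms))) // envI_pi (los hU hM).
  by apply: (uf_ext hU) => t; rewrite g_rels (holdsT_envI _ (point Ms)).
- move=> f a b; rewrite -{1}(rep_fun a) (ultrapower_funs hK) -{1}(repK hK b) (ultrapower_eq hK).
  rewrite holdsG_envI // envI_pi (los hU hM).
  by apply: (uf_ext hU) => t; rewrite g_funs holdsG_envI.
Qed.

End InterpretationUltrapower.

Lemma countable_sig_size_le (S S0 S1 : sig) :
  countable_sig S0 -> countable_sig S1 -> sig_size_le S S0 S1 -> countable_sig S.
Proof.
move=> [[f0 f0_inj] [r0 r0_inj]] [[f1 f1_inj] [r1 r1_inj]] [F F_inj].
pose enc (x : Defs.fsym S0 + rsym S0 + (Defs.fsym S1 + rsym S1) + nat) :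
    nat + nat + (nat + nat) + nat :=
  match x with
  | inl (inl (inl a)) => inl (inl (inl (f0 a)))
  | inl (inl (inr b)) => inl (inl (inr (r0 b)))
  | inl (inr (inl a)) => inl (inr (inl (f1 a)))
  | inl (inr (inr b)) => inl (inr (inr (r1 b)))
  | inr n => inr n
  end.
have enc_inj : injective enc.
  move=> [[[a|b]|[a|b]]|n] [[[a'|b']|[a'|b']]|n'] //= [] //.
  - by move/f0_inj ->.
  - by move/r0_inj ->.
  - by move/f1_inj ->.
  - by move/r1_inj ->.
  - by move ->.
split.
- by exists (fun f => pickle (enc (F (inl f)))) => x y /(pcan_inj pickleK) /enc_inj /F_inj [].
- by exists (fun r => pickle (enc (F (inr r)))) => x y /(pcan_inj pickleK) /enc_inj /F_inj [].
Qed.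

Lemma keisler_le_of_kstar_le (Ti Tj : theory) (L : Type) :
  complete_theory (tax Ti) -> complete_theory (tax Tj) ->
  countable_sig (tsig Ti) -> countable_sig (tsig Tj) -> infinite_type L ->
  kstar_le (card_le L) aleph1_small Tj Ti -> keisler_le L Tj Ti.
Proof.
move=> cTi cTj csi csj hinf [S [T [I0 [I1 [cT [hsize [hI0 [hI1 hstar]]]]]]]].
move=> D hD M0 M1 hM0 hM1 U0 U1 [pi0 hpi0] [pi1 hpi1] hsat1.
have hU : ultrafilter D := proj1 hD.
have [Z hZ] := regular_ultrafilter_nat_family hinf hD.
have cS : countable_sig S := countable_sig_size_le csj csi hsize.
case: (cT) => _ [[Ms hMs] _].
case: hI0 => b01 [b02 [b03 /(_ Ms hMs) [K0 [iK0 hK0]]]].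
case: hI1 => b11 [b12 [b13 /(_ Ms hMs) [K1 [iK1 hK1]]]].
have uMs := ultrapower_upi Ms hU; have uK0 := ultrapower_upi K0 hU.
have uK1 := ultrapower_upi K1 hU.
have hsatK1 : saturated (card_le L) (ultrapower D K1).
  apply: (ultrapower_saturation_transfer hD hinf csi _ uK1 hpi1 hsat1).
  exact: complete_sentence_transfer cTi hK1 hM1.
have hsatK0 : saturated (card_le L) (ultrapower D K0).
  apply: (hstar _ (ultrapower_models hU uMs hMs) (ultrapower_aleph1_saturated hU hZ cS uMs)).
  - exact: (is_interp_ultrapower hU uMs uK0 b01 b02 b03 iK0).
  - exact: (is_interp_ultrapower hU uMs uK1 b11 b12 b13 iK1).
  - exact: hsatK1.
apply: (ultrapower_saturation_transfer hD hinf csj _ hpi0 uK0 hsatK0).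
exact: complete_sentence_transfer cTj hM0 hK0.
Qed.

Lemma kstar_le_one_small (lam_small kap_small : Type -> Prop) (T0 T1 : theory) :
  kstar_le lam_small one_small T0 T1 -> kstar_le lam_small kap_small T0 T1.
Proof.
move=> [S [T [I0 [I1 [cT [hsize [hI0 [hI1 hstar]]]]]]]].
exists S, T, I0, I1; do 4 split=> //.
by move=> M hM _; apply: hstar => // A [].
Qed.

Theorem claim2p1 (Ti Tj : theory) (L : Type) :
  complete_theory (tax Ti) -> complete_theory (tax Tj) ->
  countable_sig (tsig Ti) -> countable_sig (tsig Tj) ->
  infinite_type L ->
  ~ keisler_le L Tj Ti ->
  ~ kstar_le (card_le L) aleph1_small Tj Ti /\
  ~ kstar_le (card_le L) one_small Tj Ti.
Proof.
move=> cTi cTj csi csj hinf hnot.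
have hnot_aleph1 : ~ kstar_le (card_le L) aleph1_small Tj Ti.
  by move/(keisler_le_of_kstar_le cTi cTj csi csj hinf).
by split=> // /kstar_le_one_small.
Qed.
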